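(* For every integer $n \geq 1$, $D_n = n\left[D_{n-1} + (-1)^{n-1}\right]$, with the convention $D_0 = 0$.
   Context: A linear arrangement of $\{1,\ldots,n\}$ is a sequence $a_1\cdots a_n$ in which each of $1,\ldots,n$ appears exactly once. It contains the pattern $ij$ if $a_t=i$ and $a_{t+1}=j$ for some $t$; otherwise it avoids it. $D_n$ is the number of linear arrangements of $\{1,\ldots,n\}$ avoiding all of the patterns $12, 23, \ldots, (n-1)n, n1$; $D_0=0$. *)

From mathcomp Require Import all_boot all_order all_algebra all_fingroup.
Set Implicit Arguments. Unset Strict Implicit. Unset Printing Implicit Defensive.

(* A linear arrangement a_1 ... a_n of {1..n} is encoded as a permutation
   s : 'S_n with a_{t+1} = (s t) + 1 for t : 'I_n (0-based positions/values).
   The forbidden patterns 12, 23, ..., (n-1)n, n1 are exactly the pairs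
   (i, j) with j = i+1 cyclically; in 0-based values: j = (i + 1) %% n. *)
Definition avoids_cyc (n : nat) (s : 'S_n) : bool :=
  [forall t : 'I_n, forall u : 'I_n,
     (val u == (val t).+1) ==> (val (s u) != ((val (s t)).+1 %% n))].

Definition D (n : nat) : nat :=
  if n is 0 then 0 else #|[set s : 'S_n | avoids_cyc s]|.

From mathcomp Require Import all_boot all_order all_algebra all_fingroup.
From mathcomp Require Import zify ring.
Set Implicit Arguments. Unset Strict Implicit. Unset Printing Implicit Defensive.

(* Let n_avoid r X count the arrangements of X in which no b immediately follows an a with
   r a b.  Splitting by whether x y occurs gives deletion-contraction: forbidding x y as
   well, plus counting arrangements of X minus y with y glued behind x.  Along a chain of k
   successions on N letters this yields the inclusion-exclusion sum
   chain_free N k = sum_j (-1)^j C(k,j) (N-j)!.  Deleting the succession n -> 1 from the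
   cycle and contracting it gives D_n + D_(n-1) = chain_free n (n-1), hence
   D_n = d_n - (-1)^n with d_n = chain_free n n the derangement numbers, and the recurrence
   is that of d_n. *)

Import GRing.Theory.

Lemma count_leq_can (T U : eqType) (s : seq T) (t : seq U) (P : pred T) (Q : pred U)
    (F : T -> U) (G : U -> T) :
    uniq s -> {in s, forall x, P x -> [/\ F x \in t, Q (F x) & G (F x) = x]} ->
  count P s <= count Q t.
Proof.
move=> us FK; rewrite -!size_filter -(size_map F); apply: uniq_leq_size.
  rewrite map_inj_in_uniq ?filter_uniq // => x1 x2.
  rewrite !mem_filter => /andP[P1 s1] /andP[P2 s2] eqF.
  by have [_ _ <-] := FK _ s1 P1; have [_ _ <-] := FK _ s2 P2; rewrite eqF.
move=> y /mapP[x]; rewrite mem_filter => /andP[Px sx] ->.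
by have [tF QF _] := FK _ sx Px; rewrite mem_filter QF tF.
Qed.

Lemma count_bij (T U : eqType) (s : seq T) (t : seq U) (P : pred T) (Q : pred U)
    (F : T -> U) (G : U -> T) : uniq s -> uniq t ->
    {in s, forall x, P x -> [/\ F x \in t, Q (F x) & G (F x) = x]} ->
    {in t, forall y, Q y -> [/\ G y \in s, P (G y) & F (G y) = y]} ->
  count P s = count Q t.
Proof.
move=> us ut FK GK.
by apply/anti_leq/andP; split; [exact: count_leq_can FK | exact: count_leq_can GK].
Qed.

Lemma count_inj_size (T U : eqType) (s : seq T) (t : seq U) (P : pred T) (Q : pred U)
    (F : T -> U) : uniq s -> uniq t ->
    {in s &, injective F} -> {subset map F s <= t} -> size t <= size s ->
    {in s, forall x, P x = Q (F x)} ->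
  count P s = count Q t.
Proof.
move=> us ut Finj sFt le_ts PQ.
have uFs : uniq (map F s) by rewrite map_inj_in_uniq.
have [|_ eq_Ft] := uniq_min_size uFs sFt; first by rewrite size_map.
rewrite (eq_in_count PQ) -(count_map F Q).
exact/seq.permP/uniq_perm.
Qed.

Lemma perm_rem (T : eqType) (y : T) s t :
  y \in s -> perm_eq s t -> perm_eq (rem y s) (rem y t).
Proof.
move=> ys st; have yt : y \in t by rewrite -(perm_mem st).
rewrite -(perm_cons y) -(seq.permPl (perm_to_rem ys)) -(seq.permPr (perm_to_rem yt)).
exact: st.
Qed.

Lemma rem_cat_notin (T : eqType) (y : T) p s : y \notin p -> rem y (p ++ s) = p ++ rem y s.
Proof.
by elim: p => //= a p IHp; rewrite inE negb_or eq_sym => /andP[/negbTE-> /IHp->].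
Qed.

Section Avoidance.

Variable T : eqType.
Implicit Types (r : rel T) (x y : T) (p q s X : seq T).

Definition avoids r s : bool := sorted (fun a b => ~~ r a b) s.

Definition n_avoid r X : nat := count (avoids r) (permutations X).

Lemma eq_n_avoid r r' X : {in X &, r =2 r'} -> n_avoid r X = n_avoid r' X.
Proof.
move=> rr'; apply: eq_in_count => s; rewrite mem_permutations => sX.
case: s sX => //= a s sX; apply: (eq_in_path (P := mem X)).
  by move=> u v uX vX /=; rewrite rr'.
by apply/allP => z; rewrite (perm_mem sX).
Qed.

Lemma avoids_addrel r x y s :
  avoids [rel a b | r a b || (a == x) && (b == y)] s = avoids r s && ~~ infix [:: x; y] s.
Proof.
case: s => // a s; rewrite /avoids /=.
elim: s a => [|b s IHs] a /=; first by rewrite andbF.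
rewrite IHs prefix0s andbT [a == x]eq_sym [b == y]eq_sym.
by case: (r a b); case: (x == a); case: (y == b); case: (path _ b s);
  case: (_ && prefix _ s); case: (infix _ s).
Qed.

(* The glued block x y behaves as x towards its predecessor and as y towards its successor. *)
Definition contract r x y : rel T := fun a b => r (if a == x then y else a) b.

Lemma avoids_contract r x y p q : x \notin p -> x \notin q -> ~~ r x y ->
  avoids r (p ++ x :: y :: q) = avoids (contract r x y) (p ++ x :: q).
Proof.
move=> xp xq rxy.
have ee' : {in predC1 x &, (fun a b => ~~ r a b) =2 (fun a b => ~~ contract r x y a b)}.
  by move=> a b /negbTE ax _; rewrite /contract ax.
rewrite /avoids !sorted_cat_cons; congr (_ && _).
  case: p xp => //= a p; rewrite inE negb_or eq_sym => /andP[ax xp].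
  have xap : x \notin a :: p by rewrite inE negb_or eq_sym ax.
  have lx : last a p != x by apply: contraTneq (mem_last a p) => ->.
  rewrite !rcons_path (eq_in_path ee'); last by apply/allP => z zp; apply: contraTneq zp => ->.
  by rewrite /contract (negbTE lx).
rewrite /= rxy /=; case: q xq => //= b q xbq.
rewrite (eq_in_path ee'); last by apply/allP => z zq; apply: contraTneq zq => ->.
by rewrite /contract eqxx.
Qed.

Fixpoint insert_after x y s : seq T :=
  if s is a :: s' then if a == x then a :: y :: s' else a :: insert_after x y s'
  else [::].

Lemma insert_after_cat x y p q :
  x \notin p -> insert_after x y (p ++ x :: q) = p ++ x :: y :: q.
Proof.
by elim: p => /= [|a p IHp]; rewrite ?eqxx // inE negb_or eq_sym => /andP[/negbTE-> /IHp->].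
Qed.

Lemma n_avoid_del_contract r X x y : uniq X -> x \in X -> y \in X -> x != y -> ~~ r x y ->
  n_avoid r X =
  n_avoid [rel a b | r a b || (a == x) && (b == y)] X + n_avoid (contract r x y) (rem y X).
Proof.
move=> uX xX yX xy rxy.
rewrite /n_avoid -size_filter -(count_predC (infix [:: x; y])) !count_filter addnC.
congr (_ + _); first by apply: eq_count => s; rewrite /= avoids_addrel andbC.
have remK p q : y \notin p -> rem y (p ++ x :: y :: q) = p ++ x :: q.
  by move=> yp; rewrite rem_cat_notin //= (negbTE xy) eqxx.
have yin p q : y \in p ++ x :: y :: q by rewrite mem_cat !inE eqxx !orbT.
have permX p q : y \notin p -> perm_eq (p ++ x :: q) (rem y X) ->
    perm_eq (p ++ x :: y :: q) X.
  move=> yp pqX; rewrite (seq.permPr (perm_to_rem yX)) (seq.permPl (perm_to_rem (yin p q))).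
  by rewrite remK // perm_cons.
apply: (count_bij (F := rem y) (G := insert_after x y)); try exact: permutations_uniq.
  move=> s sX /andP[/infixP[p [q /= Es]] rs]; subst s; rewrite mem_permutations in sX.
  have := perm_uniq sX; rewrite uX uniq_catC /= !inE !mem_cat !negb_or.
  move=> /and3P[/and3P[_ xq xp] /andP[yq yp] _].
  rewrite remK // insert_after_cat // -avoids_contract // rs.
  split=> //; rewrite mem_permutations -(remK p q) //.
  exact: perm_rem (yin p q) sX.
move=> t; rewrite mem_permutations => tX rt.
have ut : uniq t by rewrite (perm_uniq tX) rem_uniq.
have xt : x \in t by rewrite (perm_mem tX) mem_rem_uniq // inE xy.
have yt : y \notin t by rewrite (perm_mem tX) mem_rem_uniqF.
case/splitPr: xt ut tX rt yt => p q.
rewrite uniq_catC /= mem_cat !negb_or mem_cat inE !negb_or.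
move=> /andP[/andP[xq xp] _] tX rt /and3P[yp _ yq].
rewrite insert_after_cat // remK // avoids_contract // rt infix_infix.
by rewrite mem_permutations permX.
Qed.

End Avoidance.

Lemma n_avoid_map (T U : eqType) (h : U -> T) (r : rel T) (Y : seq U) :
  injective h -> uniq Y -> n_avoid r (map h Y) = n_avoid (relpre h r) Y.
Proof.
move=> h_inj uY; symmetry; apply: (count_inj_size (F := map h)).
- exact: permutations_uniq.
- exact: permutations_uniq.
- by move=> s1 s2 _ _; apply: inj_map.
- by move=> _ /mapP[s sY ->]; rewrite mem_permutations perm_map // -mem_permutations.
- by rewrite !size_permutations ?map_inj_uniq ?size_map.
- by move=> s _; rewrite /avoids sorted_map.
Qed.

Section ChainFree.

Local Open Scope ring_scope.

Definition chain_free (N k : nat) : int :=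
  \sum_(0 <= j < k.+1) (-1) ^+ j * ('C(k, j) * (N - j)`!)%:Z.

Lemma chain_free0 N : chain_free N 0 = (N`!)%:Z.
Proof. by rewrite /chain_free big_nat1 expr0 mul1r bin0 mul1n subn0. Qed.

Lemma chain_freeS N k : chain_free N k.+1 = chain_free N k - chain_free N.-1 k.
Proof.
pose t N k j : int := (-1) ^+ j * ('C(k, j) * (N - j)`!)%:Z.
have tS j : t N k.+1 j.+1 = t N k j.+1 - t N.-1 k j.
  rewrite /t; have -> : (N - j.+1 = N.-1 - j)%N by lia.
  by rewrite binS mulnDl PoszD exprS; ring.
have -> : chain_free N k = \sum_(0 <= j < k.+2) t N k j.
  by rewrite big_nat_recr //= /t bin_small // mul0n mulr0 addr0.
rewrite /chain_free [LHS]big_nat_recl // [X in _ = X - _]big_nat_recl //.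
under eq_bigr do rewrite -/(t N k.+1 _) tS.
by rewrite sumrB addrA /t !bin0.
Qed.

Lemma chain_free_diagS n :
  chain_free n.+1 n.+1 = n.+1%:Z * chain_free n n + (-1) ^+ n.+1.
Proof.
rewrite /chain_free big_nat_recr //= binn subnn mul1n mulr1 mulr_sumr.
congr (_ + _); apply: eq_big_nat => j /andP[_ le_jn].
have fact_bin : ('C(n.+1, j) * (n.+1 - j)`! = n.+1 * ('C(n, j) * (n - j)`!))%N.
  by rewrite subSn // factS mulnA [(_ * (n - j).+1)%N]mulnC -subSn // -mul_bin_down mulnA.
by rewrite fact_bin PoszM mulrCA.
Qed.

End ChainFree.

Definition chain (T : eqType) (c : seq T) : rel T := fun a b => infix [:: a; b] c.

Lemma chain_cons (T : eqType) (x : T) c a b :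
  chain (x :: c) a b = (a == x) && prefix [:: b] c || chain c a b.
Proof. by []. Qed.

Lemma chain_meml (T : eqType) (c : seq T) a b : chain c a b -> a \in c.
Proof. by move/mem_infix; apply; rewrite inE eqxx. Qed.

Lemma n_avoid_chain (T : eqType) k (X c : seq T) :
    uniq X -> uniq c -> {subset c <= X} -> size c = k.+1 ->
  Posz (n_avoid (chain c) X) = chain_free (size X) k.
Proof.
elim: k X c => [|k IHk] X [|x [|y c]] //= uX uc cX => [_|[sc]].
  rewrite chain_free0 /n_avoid (eq_count (a2 := predT)) ?count_predT ?size_permutations //.
  by move=> [|a s] //; elim: s a => //= b s IHs a; rewrite IHs /chain infixs1 eqseq_cons andbF.
move: uc => /and3P[]; rewrite inE negb_or => /andP[xy xc] yc uc.
have xX : x \in X by apply: cX; rewrite inE eqxx.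
have yX : y \in X by apply: cX; rewrite !inE eqxx orbT.
have rxy : ~~ chain (y :: c) x y.
  by apply: (contraNN (@chain_meml _ _ x y)); rewrite inE negb_or xy.
have cF z b : z \notin c -> chain c z b = false.
  by move=> zc; apply: contraNF zc => /chain_meml.
have del :
    {in X &, [rel a b | chain (y :: c) a b || (a == x) && (b == y)] =2 chain [:: x, y & c]}.
  by move=> a b _ _; rewrite /= !chain_cons /= prefix0s andbT orbC.
have contr : {in rem y X &, contract (chain (y :: c)) x y =2 chain (x :: c)}.
  move=> a b; rewrite mem_rem_uniq // => /andP[ay _] _; rewrite /contract !chain_cons.
  case: (eqVneq a x) => [->|ax]; first by rewrite !eqxx !cF.
  by rewrite (negbTE ay).
rewrite chain_freeS -(size_rem yX) -(IHk X (y :: c)) -?(IHk (rem y X) (x :: c)) //=;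
  rewrite ?sc ?yc ?xc ?rem_uniq //.
- rewrite (n_avoid_del_contract uX xX yX xy rxy) (eq_n_avoid del) (eq_n_avoid contr).
  by rewrite PoszD addrK.
- move=> z; rewrite inE mem_rem_uniq // inE => /predU1P[->|zc]; first by rewrite xy.
  by rewrite cX ?andbT; [apply: contraNneq yc => <- | rewrite !inE zc !orbT].
- by move=> z zc; apply: cX; rewrite inE zc orbT.
Qed.

Lemma chain_iota i n a b : chain (iota i n) a b = [&& i <= a, a.+1 < i + n & b == a.+1]%N.
Proof.
elim: n i => [|n IHn] i.
  by rewrite /chain /=; symmetry; apply/and3P => -[]; lia.
rewrite -[iota i n.+1]/(i :: iota i.+1 n) chain_cons IHn.
by case: n {IHn} => [|n] /=; rewrite ?prefix0s; apply/idP/idP; lia.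
Qed.

Definition cyc_succ (N : nat) : rel nat := fun a b => b == a.+1 %% N.

Definition cyc_free (N : nat) : nat := n_avoid (cyc_succ N) (iota 0 N).

(* Delete the succession m -> 0 from the cycle; contracting it leaves the cycle on 1..m. *)
Lemma cyc_free_step m : 0 < m -> Posz (cyc_free m.+1 + cyc_free m) = chain_free m.+1 m.
Proof.
move=> m_gt0; have uX := iota_uniq 0 m.+1.
have mX : m \in iota 0 m.+1 by rewrite mem_iota; lia.
have X0 : 0 \in iota 0 m.+1 by rewrite mem_iota.
have m_neq0 : m != 0 by rewrite -lt0n.
have chain_m0 : ~~ chain (iota 0 m.+1) m 0 by rewrite chain_iota ltnn andbF.
have := n_avoid_chain uX uX (fun _ => id) (size_iota 0 m.+1).
rewrite size_iota => <-.
rewrite (n_avoid_del_contract uX mX X0 m_neq0 chain_m0); congr (Posz (_ + _)).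
  apply: eq_n_avoid => a b; rewrite !mem_iota /cyc_succ => am bm.
  rewrite /= -[0 :: iota 1 m]/(iota 0 m.+1) chain_iota.
  have [am'|->] : a < m \/ a = m by lia.
    by rewrite modn_small //; apply/idP/idP; lia.
  by rewrite modnn; apply/idP/idP; lia.
have -> : rem 0 (iota 0 m.+1) = map succn (iota 0 m).
  by rewrite /= -[1]/(1 + 0)%N iotaDl.
rewrite n_avoid_map ?iota_uniq //; last exact: succn_inj.
apply: eq_n_avoid => a b; rewrite !mem_iota /contract /cyc_succ => am bm /=.
rewrite -[0 :: iota 1 m]/(iota 0 m.+1) chain_iota.
case: (eqVneq a.+1 m) => [<-|am1]; first by rewrite modnn; apply/idP/idP; lia.
by rewrite modn_small; [apply/idP/idP | rewrite ltn_neqAle am1]; lia.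
Qed.

Lemma cyc_free_closed n : Posz (cyc_free n.+1) = (chain_free n.+1 n.+1 - (-1) ^+ n.+1)%R.
Proof.
elim: n => [|n IHn]; first by rewrite /chain_free !big_nat_recr // big_geq.
have := cyc_free_step (ltn0Sn n); rewrite PoszD IHn => step.
by rewrite [chain_free n.+2 n.+2]chain_freeS -step /= !exprS; ring.
Qed.

Lemma sorted_enum_ord n (e : rel 'I_n.+1) :
  sorted e (enum 'I_n.+1) = [forall t, forall u, (val u == (val t).+1) ==> e t u].
Proof.
apply/(sortedP ord0)/forallP; rewrite size_enum_ord; [move=> sorted_e t | move=> adj_e i lt_in].
  apply/forallP => u; apply/implyP => /eqP ut.
  by have := sorted_e t; rewrite -ut ltn_ord !nth_ord_enum; apply.
have nthE j (lt_jn : j < n.+1) : nth ord0 (enum 'I_n.+1) j = Ordinal lt_jn.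
  by apply: val_inj; rewrite /= nth_enum_ord.
have := adj_e (Ordinal (ltnW lt_in)) => /forallP /(_ (Ordinal lt_in)) /implyP.
by rewrite (nthE i (ltnW lt_in)) (nthE i.+1 lt_in); apply.
Qed.

Lemma avoids_cyc_codom n (s : 'S_n.+1) :
  avoids_cyc s = avoids (relpre val (cyc_succ n.+1)) (codom s).
Proof. by rewrite /avoids codomE sorted_map sorted_enum_ord. Qed.

Lemma codom_perm_eq (T : finType) (s : {perm T}) : perm_eq (codom s) (enum T).
Proof.
apply: uniq_perm; rewrite ?enum_uniq //.
  by rewrite codomE map_inj_uniq ?enum_uniq //; apply: perm_inj.
by move=> i; rewrite mem_enum -(permKV s i) codom_f.
Qed.

Lemma D_cyc_free n : D n.+1 = cyc_free n.+1.
Proof.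
rewrite /D cardsE cardE /enum_mem size_filter -enumT.
rewrite /cyc_free -val_enum_ord n_avoid_map ?enum_uniq //; last exact: val_inj.
apply: (count_inj_size (F := fun s : 'S_n.+1 => codom s)).
- exact: enum_uniq.
- exact: permutations_uniq.
- move=> s1 s2 _ _; rewrite !codomE => /eq_in_map eq_s.
  by apply/permP => i; apply: eq_s; rewrite mem_enum.
- by move=> _ /mapP[s _ ->]; rewrite mem_permutations codom_perm_eq.
- by rewrite size_permutations ?enum_uniq // size_enum_ord -cardE card_Sn.
- by move=> s _; exact: avoids_cyc_codom.
Qed.

Lemma D_closed n : Posz (D n) = (chain_free n n - (-1) ^+ n)%R.
Proof.
case: n => [|n]; last by rewrite D_cyc_free cyc_free_closed.
by rewrite /chain_free big_nat1.
Qed.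

Local Open Scope ring_scope.

Theorem corollary3p2 (n : nat) : (1 <= n)%N ->
  (D n)%:Z = n%:Z * ((D n.-1)%:Z + (-1) ^+ n.-1).
Proof.
case: n => // n _.
by rewrite !D_closed chain_free_diagS /= addrK subrK.
Qed.
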